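(* Let $(X,\varphi,G)$ be a dynamical system, $n\in\mathbb N$ and $x=(x_1,\dots,x_n)\in X^n$. If $x$ is an $n$-IN-tuple, then $x$ is an $n$-regionally proximal tuple. In particular, every $n$-IT-tuple is an $n$-regionally proximal tuple.
   Context: $G$ is an infinite countable group acting continuously (via $\varphi$) on a compact metric space $(X,d)$. For a tuple $(A_1,\dots,A_k)$ of subsets of $X$, a set $J\subseteq G$ is an independence set if for every nonempty finite $I\subseteq J$ and every $s:I\to\{1,\dots,k\}$ we have $\bigcap_{g\in I}\varphi^{g^{-1}}A_{s(g)}\neq\emptyset$. A tuple $(x_1,\dots,x_n)\in X^n$ is an $n$-IN-tuple (resp. $n$-IT-tuple) if for every product neighborhood $U_1\times\dots\times U_n$ of it, $(U_1,\dots,U_n)$ has arbitrarily large finite independence sets (resp. an infinite independence set). A tuple $(x_1,\dots,x_n)$ is $n$-regionally proximal if for every $\varepsilon>0$ there exist $x_1',\dots,x_n'\in X$ with $d(x_i,x_i')<\varepsilon$ for all $i$ and some $g\in G$ with $d(\varphi^g x_i',\varphi^g x_j')<\varepsilon$ for all $i,j$. *)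

From HB Require Import structures.
From mathcomp Require Import all_boot all_order all_algebra.
From mathcomp Require Import all_classical all_reals all_analysis.
Set Implicit Arguments. Unset Strict Implicit. Unset Printing Implicit Defensive.
Import Order.TTheory GRing.Theory Num.Theory.
Local Open Scope classical_set_scope.
Local Open Scope ring_scope.

Section Dyn.
Variables (R : realType) (G : groupType) (X : metricType R) (phi : G -> X -> X).

(* J \subseteq G is an independence set for the tuple A = (A_1,...,A_k):
   for every nonempty finite I \subseteq J and every s : I -> {1..k},
   \bigcap_{g in I} phi^{g^{-1}} A_{s(g)} is nonempty.
   (s is given as a function on all of G; only its values on I matter.) *)
Definition independence_set (k : nat) (A : 'I_k -> set X) (J : set G) : Prop :=
  forall I : set G, finite_set I -> I !=set0 -> I `<=` J ->
  forall s : G -> 'I_k,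
    (\bigcap_(g in I) (phi (g^-1)%g @` A (s g))) !=set0.

Definition IN_tuple (n : nat) (x : 'I_n -> X) : Prop :=
  forall U : 'I_n -> set X, (forall i, nbhs (x i) (U i)) ->
  forall m : nat, exists J : set G,
    [/\ finite_set J, (`I_m #<= J)%card & independence_set U J].

Definition IT_tuple (n : nat) (x : 'I_n -> X) : Prop :=
  forall U : 'I_n -> set X, (forall i, nbhs (x i) (U i)) ->
  exists J : set G, infinite_set J /\ independence_set U J.

Definition regionally_proximal (n : nat) (x : 'I_n -> X) : Prop :=
  forall eps : R, 0 < eps ->
  exists x' : 'I_n -> X,
    (forall i, mdist (x i) (x' i) < eps) /\
    exists g : G, forall i j, mdist (phi g (x' i)) (phi g (x' j)) < eps.

End Dyn.

From HB Require Import structures.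
From mathcomp Require Import all_boot all_order all_algebra.
From mathcomp Require Import all_classical all_reals all_analysis.
From mathcomp Require Import finmap zify.
Set Implicit Arguments. Unset Strict Implicit. Unset Printing Implicit Defensive.
Import Order.TTheory GRing.Theory Num.Theory.

(* Cover X by finitely many cells of diameter < eps, say D of them, and pick M
   with D (n-1)^M < n^M.  An independence set {g_1, ..., g_M} for the balls
   B(x_i, eps) yields, for every pattern s : [1,M] -> [1,n], a point y_s with
   g_k y_s in B(x_(s k), eps) for all k.  Colour each pattern by the cell of y_s:
   the counting bound forces a colour class in which some coordinate k takes
   all n values.  Choosing s_i in that class with s_i k = i, the points
   x'_i = g_k y_(s_i) are eps-close to x_i, and g_k^-1 maps them all into one
   cell. *)

Section FfunColoring.
Variables I T : finType.

Lemma card_family_avoid (m : I -> T) :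
  #|family (fun k => predC1 (m k))| = #|T|.-1 ^ #|I|.
Proof.
rewrite card_family foldrE big_map big_enum /=.
under eq_bigr => k _ do rewrite cardC1.
by rewrite prod_nat_const.
Qed.

Lemma ffun_set_full_coord (S : {set {ffun I -> T}}) :
  #|T|.-1 ^ #|I| < #|S| -> exists k, forall t, exists2 s, s \in S & s k = t.
Proof.
move=> ltS.
have [/existsP[k /forallP full]|] := boolP [exists k, [forall t, [exists s in S, s k == t]]].
  by exists k => t; have /existsP[s /andP[sS /eqP]] := full t; exists s.
rewrite negb_exists => /forallP miss; exfalso.
have /fin_all_exists[m mP] : forall k, exists t, forall s, s \in S -> s k != t.
  move=> k; have /existsP[t] := miss k; rewrite negb_exists => /forallP tS.
  by exists t => s sS; have := tS s; rewrite sS.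
suff: #|S| <= #|T|.-1 ^ #|I| by rewrite leqNgt ltS.
rewrite -(card_family_avoid m); apply/subset_leq_card/fintype.subsetP => s sS.
by apply/familyP => k; rewrite inE; exact: mP.
Qed.

Lemma ffun_coloring_full_coord (D : finType) (c : {ffun I -> T} -> D) :
  #|D| * #|T|.-1 ^ #|I| < #|T| ^ #|I| ->
  exists d k, forall t, exists2 s, c s = d & s k = t.
Proof.
move=> ltD.
suff [d /ffun_set_full_coord[k full]] : exists d, #|T|.-1 ^ #|I| < #|[set s | c s == d]|.
  by exists d, k => t; have [s] := full t; rewrite inE => /eqP; exists s.
have [/existsP[d ltd]|] := boolP [exists d, #|T|.-1 ^ #|I| < #|[set s | c s == d]|].
  by exists d.
rewrite negb_exists => /forallP small; exfalso; move: ltD; apply/negP; rewrite -leqNgt.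
rewrite -card_ffun -sum1_card (partition_big c xpredT) //= -sum_nat_const.
by apply: leq_sum => d _; rewrite sum1_card -cardsE leqNgt small.
Qed.

End FfunColoring.

Lemma bernoulli_expn (a M : nat) : a ^ M * (a + M) <= a * a.+1 ^ M.
Proof. by elim: M => [|M IH]; rewrite ?expn0 ?expnS; nia. Qed.

Lemma exists_mul_expn_lt (N a : nat) : exists M, N * a ^ M.+1 < a.+1 ^ M.+1.
Proof.
exists (N * a); case: a => [|a]; first by rewrite exp0n ?muln0.
have := bernoulli_expn a.+1 (N * a.+1).+1.
have : 0 < a.+1 ^ (N * a.+1).+1 by rewrite expn_gt0.
set p := _ ^ _.+1; set q := _ ^ _.+1; nia.
Qed.

Local Open Scope classical_set_scope.
Local Open Scope ring_scope.

Lemma compact_finite_ball_cover (R : numFieldType) (X : pseudoMetricType R) (r : R) :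
  compact [set: X] -> 0 < r ->
  exists D : {fset X}, forall y, exists2 c, c \in D & ball c r y.
Proof.
move=> /compact_near_coveringP Xcover r0.
pose F := filter_from [set: {fset X}] (fun D0 => [set D | (D0 `<=` D)%fset]).
have FF : Filter F.
  apply: filter_from_filter; first by exists fset0.
  by move=> D1 D2 _ _; exists (D1 `|` D2)%fset => // D /=; rewrite fsubUset => /andP.
have [x _|D0 _ D0P] := Xcover _ F (fun D y => exists2 c, c \in D & ball c r y) FF.
  exists (ball x r, [set D | ([fset x] `<=` D)%fset]).
    by split; [exact: nbhsx_ballx | exists [fset x]%fset].
  by case=> y D [/= xy]; rewrite fsub1set => xD; exists x.
by exists D0 => y; exact: D0P (fsubset_refl _) y I.
Qed.

Lemma compact_finite_coloring (R : numFieldType) (X : pseudoMetricType R) (e : R) :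
  compact [set: X] -> 0 < e ->
  exists (D : finType) (c : X -> D), forall y z, c y = c z -> ball y e z.
Proof.
move=> Xc e0; have [|D Dcover] := compact_finite_ball_cover Xc (_ : 0 < e / 2).
  by rewrite divr_gt0.
have /choice[c cP] : forall y, exists c : D, ball (val c) (e / 2) y.
  by move=> y; have [c cD ?] := Dcover y; exists [` cD]%fset.
by exists D, c => y z cyz; apply: (ball_splitr (cP y)); rewrite cyz.
Qed.

Lemma card_leII_inj (T : Type) (J : set T) M :
  (`I_M #<= J)%card -> exists2 f : 'I_M -> T, injective f & range f `<=` J.
Proof.
move/card_leP => [f].
pose g (k : 'I_M) : T := val (f (exist _ (nat_of_ord k) (mem_set (ltn_ord k)))).
exists g; last by move=> _ [k _ <-]; rewrite /g; case: (f _) => /= v /set_mem.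
move=> k1 k2 /val_inj/(@inj _ _ _ f) => /(_ (in_setT _) (in_setT _)).
by case=> /val_inj.
Qed.

Lemma infinite_card_leII (T : Type) (J : set T) M :
  infinite_set J -> (`I_M #<= J)%card.
Proof.
by move=> /infiniteP; apply: card_le_trans; exact: subset_card_le.
Qed.

Section IndependenceSets.
Variables (R : realType) (G : groupType) (X : metricType R) (phi : G -> X -> X).
Hypothesis phi_one : forall y : X, phi 1%g y = y.
Hypothesis phi_mul : forall (g h : G) (y : X), phi (g * h)%g y = phi g (phi h y).

Lemma phiK g : cancel (phi g) (phi g^-1).
Proof. by move=> y; rewrite -phi_mul mulVg phi_one. Qed.

Lemma phiVK g : cancel (phi g^-1) (phi g).
Proof. by move=> y; rewrite -phi_mul mulgV phi_one. Qed.

Lemma independence_set_visits k (A : 'I_k -> set X) (J I : set G) :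
  independence_set phi A J -> finite_set I -> I !=set0 -> I `<=` J ->
  forall s : G -> 'I_k, exists y, forall g, I g -> A (s g) (phi g y).
Proof.
move=> indJ Ifin I0 IJ s; have [y yI] := indJ I Ifin I0 IJ s.
by exists y => g Ig; have [z Az <-] := yI g Ig; rewrite phiVK.
Qed.

Lemma independence_set_ord_visits k M (A : 'I_k -> set X) (J : set G)
    (f : 'I_M.+1 -> G) :
  injective f -> range f `<=` J -> independence_set phi A J ->
  forall s : 'I_M.+1 -> 'I_k, exists y, forall i, A (s i) (phi (f i) y).
Proof.
move=> finj fJ indJ s.
pose sG g := oapp s (s ord0) [pick i | f i == g].
have sGf i : sG (f i) = s i.
  by rewrite /sG; case: pickP => [j /eqP/finj -> | /(_ i)]; rewrite ?eqxx.
have [|y yf] := independence_set_visits indJ (finite_image f finite_finset) _ fJ sG.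
  by exists (f ord0); exact: imageT.
by exists y => i; rewrite -sGf; exact/yf/imageT.
Qed.

Hypothesis X_compact : compact [set: X].

Lemma regionally_proximal_of_independence n (x : 'I_n -> X) :
  (forall eps, 0 < eps -> forall M, exists2 J, (`I_M #<= J)%card &
     independence_set phi (fun i => ball (x i) eps) J) ->
  regionally_proximal phi x.
Proof.
move=> indep eps eps0; case: n x indep => [|n] x indep.
  by exists x; split=> [[]//|]; exists 1%g => -[].
have [D [c cP]] := compact_finite_coloring X_compact eps0.
have [M ltM] := exists_mul_expn_lt #|D| n.
have [J JM indJ] := indep eps eps0 M.+1.
have [f finj fJ] := card_leII_inj JM.
have /choice[y yP] : forall s : {ffun 'I_M.+1 -> 'I_n.+1},
    exists y, forall i, ball (x (s i)) eps (phi (f i) y).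
  by move=> s; exact: independence_set_ord_visits finj fJ indJ s.
have [|d [k /fin_all_exists2[sel selc selk]]] := ffun_coloring_full_coord (c \o y).
  by rewrite !card_ord.
exists (fun i => phi (f k) (y (sel i))); split.
  by move=> i; have := yP (sel i) k; rewrite selk ballEmdist.
exists (f k)^-1%g => i j; rewrite !phiK.
by move: (cP _ _ (etrans (selc i) (esym (selc j)))); rewrite ballEmdist.
Qed.

End IndependenceSets.

Theorem proposition2p6
  (R : realType) (G : groupType) (X : metricType R) (phi : G -> X -> X)
  (G_countable : countable [set: G]) (G_infinite : infinite_set [set: G])
  (X_compact : compact [set: X])
  (phi_one : forall y : X, phi 1%g y = y)
  (phi_mul : forall (g h : G) (y : X), phi (g * h)%g y = phi g (phi h y))
  (phi_cont : forall g : G, continuous (phi g))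
  (n : nat) (x : 'I_n -> X) :
  (IN_tuple phi x -> regionally_proximal phi x) /\
  (IT_tuple phi x -> regionally_proximal phi x).
Proof.
split=> [xIN|xIT]; apply: regionally_proximal_of_independence => // eps eps0 M.
  by have [J [_ JM indJ]] := xIN _ (fun i => nbhsx_ballx (x i) eps eps0) M; exists J.
have [J [Jinf indJ]] := xIT _ (fun i => nbhsx_ballx (x i) eps eps0).
by exists J => //; exact: infinite_card_leII.
Qed.
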